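(* Let $i\geq 5$ and $j\geq 1$ be integers. Then $$R_1^{\mathcal{CA}}(i,j)=\begin{cases}2j-1, & \text{if } j \text{ is odd},\\ 2j-2, & \text{if } j \text{ is even},\end{cases}$$ where $\mathcal{CA}$ is the class of cacti.
   Context: All graphs are finite and simple. For a graph $G$ and a nonnegative integer $k$, a $k$-sparse $j$-set is a set of $j$ vertices of $G$ inducing a subgraph of maximum degree at most $k$; a $k$-dense $i$-set is a set of $i$ vertices of $G$ that is $k$-sparse in the complement of $G$. For a graph class $\mathcal{G}$, $R_k^{\mathcal{G}}(i,j)$ is the smallest natural number $n$ such that every graph on $n$ vertices in $\mathcal{G}$ has either a $k$-dense $i$-set or a $k$-sparse $j$-set. A cactus is a graph (not necessarily connected) in which every block (maximal 2-connected subgraph, bridge, or isolated vertex) is a cycle, a single edge, or a single vertex. *)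

From mathcomp Require Import all_boot.
Set Implicit Arguments. Unset Strict Implicit. Unset Printing Implicit Defensive.

Definition simple_graph (V : finType) (e : rel V) : Prop :=
  symmetric e /\ irreflexive e.

Definition induced (V : finType) (e : rel V) (S : {set V}) : rel V :=
  [rel x y | [&& x \in S, y \in S & e x y]].

(* G[S] is connected (the empty set counts as connected). *)
Definition induced_connected (V : finType) (e : rel V) (S : {set V}) : bool :=
  [forall x in S, forall y in S, connect (induced e S) x y].

Definition nonseparable (V : finType) (e : rel V) (B : {set V}) : bool :=
  [&& B != set0, induced_connected e B &
      [forall v in B, induced_connected e (B :\ v)]].

(* A block: maximal nonseparable (induced) subgraph, given by its vertex set.
   (Blocks of simple graphs are induced subgraphs.) *)
Definition is_block (V : finType) (e : rel V) (B : {set V}) : bool :=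
  maxset (nonseparable e) B.

Definition induces_cycle (V : finType) (e : rel V) (B : {set V}) : bool :=
  [&& 3 <= #|B|, induced_connected e B &
      [forall v in B, #|[set u in B | e v u]| == 2]].

Definition cactus (V : finType) (e : rel V) : bool :=
  [forall B : {set V}, is_block e B ==>
     [|| induces_cycle e B,
         (#|B| == 2) && [forall x in B, forall y in B, (x != y) ==> e x y]
       | #|B| == 1]].

Definition sparse_set (V : finType) (e : rel V) (k j : nat) (S : {set V}) : bool :=
  (#|S| == j) && [forall v in S, #|[set u in S | e v u]| <= k].

Definition compl_rel (V : finType) (e : rel V) : rel V :=
  [rel x y | (x != y) && ~~ e x y].

Definition dense_set (V : finType) (e : rel V) (k i : nat) (S : {set V}) : bool :=
  sparse_set (compl_rel e) k i S.

Definition ramsey_cactus_prop (k i j n : nat) : Prop :=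
  forall e : rel 'I_n, simple_graph e -> cactus e ->
    (exists S : {set 'I_n}, dense_set e k i S) \/
    (exists S : {set 'I_n}, sparse_set e k j S).

Definition is_ramsey_cactus (k i j r : nat) : Prop :=
  ramsey_cactus_prop k i j r /\ forall n, n < r -> ~ ramsey_cactus_prop k i j n.

From mathcomp Require Import all_boot zify.
Set Implicit Arguments. Unset Strict Implicit. Unset Printing Implicit Defensive.

(* In a cactus every nonseparable induced subgraph is a cycle, an edge or a
   vertex, so inside it every vertex has degree at most 2.  Take a longest path
   x v1 v2 ... in such a graph: all neighbours of x lie on the path, and a chord
   at x closes a cycle.  Analysing the neighbours of v1 one finds an isolated
   vertex or a light pair a, b, whose closed neighbourhoods together have at most
   4 vertices.  Moving such vertices into the sparse set and deleting their
   neighbourhoods shows by induction that every cactus on n vertices has a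
   1-sparse set of size 2 (n / 4) + min (n mod 4, 2).  The disjoint union of
   4-cycles on n vertices shows that this is sharp, and as it has maximum degree
   2 it has no 1-dense 5-set.  So the Ramsey number is the least n for which
   this size reaches j. *)

Definition c4_sparse_num n := 2 * (n %/ 4) + minn (n %% 4) 2.

Lemma c4_sparse_num_sub n m :
  m <= 4 -> c4_sparse_num n <= c4_sparse_num (n - m) + minn m 2.
Proof. rewrite /c4_sparse_num; lia. Qed.

Lemma leq_c4_sparse_num j n : 0 < j ->
  (j <= c4_sparse_num n) = ((if odd j then 2 * j - 1 else 2 * j - 2) <= n).
Proof.
rewrite /c4_sparse_num; have := modn2 j.
by case: (odd j) => /= j2 j0; apply/idP/idP; lia.
Qed.

Lemma card_sub_size (T : finType) (A : {set T}) (s : seq T) :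
  {subset A <= s} -> #|A| <= size s.
Proof. by move=> As; apply: leq_trans (card_size s); apply/subset_leq_card/subsetP. Qed.

Lemma connect_step (T : finType) (r : rel T) x y :
  connect r x y -> x != y -> exists z, r x z.
Proof.
case/connectP=> [[|z p]] /= => [_ ->|/andP[rxz _] _ _]; first by rewrite eqxx.
by exists z.
Qed.

Section Graph.
Variables (V : finType) (e : rel V).
Hypotheses (esym : symmetric e) (eirr : irreflexive e).

Definition nbr (U : {set V}) v := [set u in U | e v u].

Definition maxdeg_le k (S : {set V}) := [forall v in S, #|nbr S v| <= k].

Definition nonsep_maxdeg2 (U : {set V}) :=
  forall B : {set V}, B \subset U -> nonseparable e B -> maxdeg_le 2 B.

Lemma nbr_neq U v u : u \in nbr U v -> u != v.
Proof. by rewrite inE => /andP[_]; apply: contraTneq => ->; rewrite eirr. Qed.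

Lemma nbrP (U : {set V}) v u : reflect (u \in U /\ e v u) (u \in nbr U v).
Proof. by rewrite inE; apply: andP. Qed.

Lemma nbr_sub U v : nbr U v \subset U.
Proof. by apply/subsetP=> u; rewrite inE => /andP[]. Qed.

Lemma nbrS (A B : {set V}) v : A \subset B -> nbr A v \subset nbr B v.
Proof. by move=> AB; apply/subsetP=> u; rewrite !inE => /andP[/(subsetP AB) -> ->]. Qed.

Lemma induced_sym (B : {set V}) : symmetric (induced e B).
Proof. by move=> x y; rewrite /induced /= esym andbCA. Qed.

Lemma induced_connected_connect (B : {set V}) x y :
  induced_connected e B -> x \in B -> y \in B -> connect (induced e B) x y.
Proof. by move=> /forallP/(_ x)/implyP cB /cB/forallP/(_ y)/implyP. Qed.

Lemma induced_connected_from (B : {set V}) a :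
  {in B, forall z, connect (induced e B) a z} -> induced_connected e B.
Proof.
move=> aB; apply/forallP=> x; apply/implyP=> xB; apply/forallP=> y; apply/implyP=> yB.
by apply: connect_trans (aB y yB); rewrite (sym_connect_sym (induced_sym B)) aB.
Qed.

Lemma connect_induced_path (B : {set V}) a p :
  path e a p -> all [in B] (a :: p) -> {in a :: p, forall z, connect (induced e B) a z}.
Proof.
elim: p a => [|b p IH] a /=; first by move=> _ _ z; rewrite inE => /eqP ->.
case/andP=> eab pb /and3P[aB bB pB] z; rewrite inE => /predU1P[-> //|zp].
apply: connect_trans (IH b pb _ z zp); last by rewrite /= bB.
by apply: connect1; rewrite /induced /= aB bB.
Qed.

Lemma connect_induced_sub (A B : {set V}) x y : A \subset B ->
  connect (induced e A) x y -> connect (induced e B) x y.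
Proof.
move=> AB; apply: connect_sub => u v /and3P[uA vA euv].
by apply: connect1; rewrite /induced /= (subsetP AB _ uA) (subsetP AB _ vA).
Qed.

Lemma induced_connectedU (A B : {set V}) w :
  induced_connected e A -> induced_connected e B -> w \in A -> w \in B ->
  induced_connected e (A :|: B).
Proof.
move=> cA cB wA wB; apply: (induced_connected_from (a := w)) => z.
case/setUP=> [zA|zB].
  by apply: connect_induced_sub (subsetUl A B) _; apply: induced_connected_connect.
by apply: connect_induced_sub (subsetUr A B) _; apply: induced_connected_connect.
Qed.

Lemma nonseparable_connectedD1 (C : {set V}) v :
  nonseparable e C -> induced_connected e (C :\ v).
Proof.
case/and3P=> _ cC /forall_inP dC; have [/dC // | vC] := boolP (v \in C).
by rewrite (setDidPl _) // disjoint_sym disjoints1.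
Qed.

Lemma nonseparableU (A B : {set V}) x y :
  nonseparable e A -> nonseparable e B -> x != y ->
  x \in A -> x \in B -> y \in A -> y \in B -> nonseparable e (A :|: B).
Proof.
move=> nsA nsB xy xA xB yA yB; apply/and3P; split.
- by apply/set0Pn; exists x; rewrite inE xA.
- by case/and3P: nsA => _ cA _; case/and3P: nsB => _ cB _; apply: induced_connectedU cA cB xA xB.
apply/forall_inP=> v _; rewrite setDUl.
have [w [wv wA wB]] : exists w, [/\ w != v, w \in A & w \in B].
  by case: (eqVneq x v) => [<- | xv]; [exists y; rewrite eq_sym | exists x].
have wAv : w \in A :\ v by rewrite !inE wv.
have wBv : w \in B :\ v by rewrite !inE wv.
exact: induced_connectedU (nonseparable_connectedD1 v nsA) (nonseparable_connectedD1 v nsB) wAv wBv.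
Qed.

Lemma cycle_nonseparable x s : path e x s -> e (last x s) x -> uniq (x :: s) ->
  1 < size s -> nonseparable e [set z in x :: s].
Proof.
move=> px ex ux s2; apply/and3P; split; first by apply/set0Pn; exists x; rewrite inE mem_head.
  apply: (induced_connected_from (a := x)) => z; rewrite inE => zs.
  by apply: (connect_induced_path px _ zs); apply/allP=> w; rewrite inE.
apply/forallP=> v; apply/implyP; rewrite inE => vc; set c := x :: s.
have cyc : cycle e c by rewrite /c /= rcons_path px ex.
move: (cyc) (rot_uniq (index v c) c) (size_rot (index v c) c) (mem_rot (index v c) c).
rewrite -(rot_cycle (index v c)) rot_index // ux; set w := drop _ _ ++ _.
case: w => [|a w] cyc' /andP[vw _] [sw] memw; first by rewrite -sw in s2.
move: cyc' => /= /andP[_]; rewrite rcons_path => /andP[pa _].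
have {}memw z : (z \in [set z in c] :\ v) = (z \in a :: w).
  by rewrite in_setD1 in_set -memw in_cons; case: eqVneq => [->|] //=; rewrite (negbTE vw).
apply: (induced_connected_from (a := a)) => z; rewrite memw => zw.
by apply: (connect_induced_path pa _ zw); apply/allP=> z'; rewrite memw.
Qed.

Lemma nonseparable_deg_ge2 B v :
  nonseparable e B -> 2 < #|B| -> v \in B -> 1 < #|nbr B v|.
Proof.
case/and3P=> _ _ /forall_inP sepB B3 vB; rewrite ltnNge; apply/negP=> deg1.
have [u [uB uv Nu]] : exists u, [/\ u \in B, u != v & nbr B v \subset [set u]].
  have [N0|/set0Pn[u uN]] := eqVneq (nbr B v) set0; last first.
    exists u; split; [by move: uN; rewrite inE => /andP[] | exact: nbr_neq uN |].
    by apply/subsetP=> z zN; rewrite inE -[_ == _](card_le1P deg1 u uN).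
  have /set0Pn[u] : B :\ v != set0 by rewrite -card_gt0; have := cardsD1 v B; rewrite vB; lia.
  by rewrite !inE N0 => /andP[uv uB]; exists u; rewrite ?sub0set.
have /set0Pn[w] : B :\ u :\ v != set0.
  rewrite -card_gt0; have := cardsD1 u B; have := cardsD1 v (B :\ u).
  by rewrite uB !inE eq_sym uv vB /=; lia.
rewrite !inE => /and3P[wv wu wB].
have vBu : v \in B :\ u by rewrite !inE eq_sym uv.
have wBu : w \in B :\ u by rewrite !inE wu.
have vw : v != w by rewrite eq_sym.
have [z /and3P[_ zBu evz]] :=
  connect_step (induced_connected_connect (sepB u uB) vBu wBu) vw.
move: zBu; rewrite !inE => /andP[zu zB].
by move: (subsetP Nu z); rewrite !inE zB evz (negbTE zu) => /(_ isT).
Qed.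

Lemma nonseparable_card2_edge B x y :
  nonseparable e B -> #|B| = 2 -> x \in B -> y \in B -> x != y -> e x y.
Proof.
case/and3P=> _ cB _ B2 xB yB xy.
have [z /and3P[_ zB exz]] := connect_step (induced_connected_connect cB xB yB) xy.
have [<- // | zy] := eqVneq z y.
have zx : z != x by apply: contraTneq exz => ->; rewrite eirr.
suff : 2 < #|B| by rewrite B2.
by apply/card_gt2P; exists x, y, z; rewrite eq_sym in zy.
Qed.

Lemma maxdeg2_cactus : maxdeg_le 2 [set: V] -> cactus e.
Proof.
move=> /forall_inP deg2; apply/forallP=> B; apply/implyP=> /maxsetp nsB.
have [B0 cB _] := and3P nsB.
case: (ltngtP #|B| 2) => [|B3|B2].
- by rewrite ltnS leq_eqVlt ltnS leqn0 cards_eq0 (negbTE B0) orbF => ->; rewrite !orbT.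
- apply/orP; left; apply/and3P; split=> //; apply/forall_inP=> v vB.
  rewrite eqn_leq nonseparable_deg_ge2 // andbT.
  exact: leq_trans (subset_leq_card (nbrS v (subsetT B))) (deg2 v (in_setT v)).
- apply/orP; right; apply/orP; left=> /=.
  apply/forall_inP=> x xB; apply/forall_inP=> y yB; apply/implyP.
  exact: nonseparable_card2_edge nsB B2 xB yB.
Qed.

Lemma cactus_nonsep_maxdeg2 : cactus e -> nonsep_maxdeg2 [set: V].
Proof.
move=> /forallP cactusB B _ nsB; apply/forall_inP=> v vB.
have [B0 blockB0 BB0] := maxset_exists nsB; have vB0 := subsetP BB0 v vB.
apply: leq_trans (subset_leq_card (nbrS v BB0)) _.
have nbr_card : #|nbr B0 v| <= #|B0| := subset_leq_card (nbr_sub B0 v).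
case/or3P: (implyP (cactusB B0) blockB0).
- by case/and3P=> _ _ /forall_inP/(_ v vB0)/eqP->.
- by case/andP=> /eqP B02 _; rewrite -B02.
- by move/eqP=> B01; rewrite (leq_trans nbr_card) // B01.
Qed.

Lemma maxdeg_le_small k (A : {set V}) : #|A| <= k.+1 -> maxdeg_le k A.
Proof.
move=> Ak; apply/forall_inP=> v vA; rewrite -ltnS; apply: leq_trans Ak.
by apply/proper_card/properP; split; [exact: nbr_sub | exists v; rewrite // inE eirr andbF].
Qed.

Lemma maxdeg_leU k (A S : {set V}) : maxdeg_le k A -> maxdeg_le k S ->
  {in A & S, forall a s, ~~ e a s} -> maxdeg_le k (A :|: S).
Proof.
move=> /forall_inP dA /forall_inP dS nAS; apply/forall_inP=> v /setUP[vA|vS].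
  rewrite (eq_card (_ : nbr (A :|: S) v =i nbr A v)) ?dA // => u; rewrite !inE.
  by have [uS|] := boolP (u \in S); rewrite ?orbF // (negbTE (nAS v u vA uS)) !andbF.
rewrite (eq_card (_ : nbr (A :|: S) v =i nbr S v)) ?dS // => u; rewrite !inE.
by have [uA|] := boolP (u \in A); rewrite ?(esym v u) ?(negbTE (nAS u v uA vS)) ?andbF.
Qed.

Lemma maxdeg_leS k (A B : {set V}) : A \subset B -> maxdeg_le k B -> maxdeg_le k A.
Proof.
move=> AB /forall_inP dB; apply/forall_inP=> v vA.
exact: leq_trans (subset_leq_card (nbrS v AB)) (dB v (subsetP AB v vA)).
Qed.

Lemma maxdeg1_extend (U A X S : {set V}) : #|A| <= 2 -> A \subset X ->
  {in A, forall a, nbr U a \subset X} -> S \subset U :\: X -> maxdeg_le 1 S ->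
  maxdeg_le 1 (A :|: S) /\ #|A :|: S| = #|A| + #|S|.
Proof.
move=> A2 AX NAX SUX dS; have SX s : s \in S -> (s \in U) && (s \notin X).
  by move/(subsetP SUX); rewrite in_setD andbC.
split.
  apply: maxdeg_leU (maxdeg_le_small A2) dS _ => a s aA /SX /andP[sU sX].
  by apply: contra sX => eas; apply: (subsetP (NAX a aA)); apply/nbrP.
apply/eqP; rewrite (leq_card_setU A S).2.
rewrite disjoint_subset; apply/subsetP=> z /(subsetP AX) zX; rewrite inE.
by apply/negP=> /SX; rewrite zX andbF.
Qed.

Lemma maxdeg_le_sparse_set k j (S : {set V}) :
  maxdeg_le k S -> j <= #|S| -> exists T, sparse_set e k j T.
Proof.
move=> dS /card_geqP[s [us sj sS]]; exists [set x in s].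
rewrite /sparse_set cardsE (card_uniqP us) sj eqxx /=.
by apply: maxdeg_leS dS; apply/subsetP=> x; rewrite inE => /sS.
Qed.

Lemma maxdeg_no_dense d k i (S : {set V}) :
  maxdeg_le d [set: V] -> d + k + 2 <= i -> ~~ dense_set e k i S.
Proof.
move=> /forall_inP dV ilarge; apply/negP=> /andP[/eqP cardS /forall_inP dS].
have /set0Pn[v vS] : S != set0 by rewrite -card_gt0 cardS; lia.
have cover : S \subset [set v] :|: [set u in S | compl_rel e v u] :|: nbr [set: V] v.
  apply/subsetP=> u uS; rewrite !inE uS /=.
  by case: (eqVneq u v) => //= uv; rewrite /compl_rel /= eq_sym uv; case: (e v u).
have degc : #|[set u in S | compl_rel e v u]| <= k := dS v vS.
have deg : #|nbr [set: V] v| <= d := dV v (in_setT v).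
have := subset_leq_card cover; rewrite cardS.
have := (leq_card_setU ([set v] :|: [set u in S | compl_rel e v u]) (nbr [set: V] v)).1.
have := (leq_card_setU [set v] ([set u in S | compl_rel e v u])).1; rewrite cards1.
lia.
Qed.

Section LongestPath.
Variable U : {set V}.

Definition upath x t := [&& path e x t, uniq (x :: t) & all [in U] (x :: t)].

Definition longest_upath x t :=
  upath x t /\ forall x' t', upath x' t' -> size t' <= size t.

Lemma upath_sub x t z : upath x t -> z \in x :: t -> z \in U.
Proof. by case/and3P=> _ _ /allP; apply. Qed.

Lemma upath_subset x t (B : {set V}) : upath x t -> {subset B <= x :: t} -> B \subset U.
Proof. by move=> ut Bt; apply/subsetP=> z /Bt; apply: upath_sub. Qed.

Lemma longest_upath_exists z : z \in U -> exists x t, longest_upath x t.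
Proof.
move=> zU; pose P n := [exists x, [exists t : n.-tuple V, upath x t]].
have P0 : exists n, P n.
  by exists 0; apply/existsP; exists z; apply/existsP; exists [tuple]; rewrite /upath /= zU.
have Pub n : P n -> n <= #|V|.
  case/existsP=> x /existsP[t /and3P[_ ut _]]; rewrite -(size_tuple t).
  by have := max_card (mem (x :: t)); rewrite (card_uniqP ut) => /ltnW.
case: (ex_maxnP P0 Pub) => n /existsP[x /existsP[t ut]] maxn.
exists x, t; split=> // x' t' ut'; rewrite size_tuple; apply: maxn.
by apply/existsP; exists x'; apply/existsP; exists (in_tuple t').
Qed.

Lemma longest_upath_nbr x t y : longest_upath x t -> y \in U -> e x y -> y \in t.
Proof.
case=> ut maxt yU exy; apply/negPn/negP=> yt.
have yx : y != x by apply: contraTneq exy => ->; rewrite eirr.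
have : upath y (x :: t).
  case/and3P: ut => pt uxt Ut; rewrite /upath /= esym exy pt inE negb_or yx yt.
  by move: uxt Ut => /= -> /= ->; rewrite yU.
by move/maxt; rewrite /= ltnn.
Qed.

Lemma longest_upath_rehead x t y t' :
  longest_upath x t -> upath y t' -> size t' = size t -> longest_upath y t'.
Proof. by case=> _ maxt ut' eqt; split=> // x2 t2 /maxt; rewrite eqt. Qed.

Lemma chord_nonseparable x b t y : path e x (b :: t) -> uniq (x :: b :: t) ->
  y \in t -> e x y ->
  exists2 B, nonseparable e B &
    [/\ {subset B <= x :: b :: t}, [&& x \in B, b \in B & y \in B] & head y t \in B].
Proof.
move=> pt ut yt exy; case/splitPr: t / yt pt ut => p1 p2 pt ut.
have split_t : b :: (p1 ++ y :: p2) = (b :: rcons p1 y) ++ p2 by rewrite -cat_rcons.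
exists [set z in x :: b :: rcons p1 y].
  apply: cycle_nonseparable; rewrite //= ?size_rcons //.
  - by move: pt; rewrite split_t cat_path => /andP[].
  - by rewrite last_rcons esym.
  - by move: ut; rewrite split_t -cat_cons cat_uniq => /andP[].
split.
- by move=> z; rewrite inE split_t -cat_cons mem_cat => ->.
- by rewrite !inE !mem_rcons !inE !eqxx !orbT.
- by case: p1 {pt ut split_t} => [|c p1]; rewrite !inE ?mem_rcons ?mem_head eqxx !orbT.
Qed.

Hypothesis PU : nonsep_maxdeg2 U.

Lemma upath_head_deg x t : upath x t -> #|[set u in t | e x u]| <= 2.
Proof.
elim/last_ind: t => [|t y IH] ut.
  by rewrite (eq_card0 (_ : _ =1 pred0)) // => u; rewrite !inE.
have card_le_size : #|[set u in rcons t y | e x u]| <= size (rcons t y).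
  by apply: card_sub_size => u; rewrite inE => /andP[].
have [t1|t2] := leqP (size t) 1; first by rewrite (leq_trans card_le_size) // size_rcons.
case/and3P: (ut) => pt uxt Ut.
have [exy|nexy] := boolP (e x y); last first.
  rewrite (eq_card (_ : _ =i [set u in t | e x u])); last first.
    by move=> u; rewrite !inE mem_rcons inE; case: eqVneq => [->|]; rewrite ?(negbTE nexy) ?andbF.
  apply: IH; move: ut; rewrite /upath -rcons_cons rcons_path rcons_uniq all_rcons.
  by case/and3P=> /andP[-> _] /andP[_ ->] /andP[_ ->].
have cycB : nonseparable e [set z in x :: rcons t y].
  by apply: cycle_nonseparable; rewrite ?last_rcons 1?esym ?size_rcons // ltnW.
have BU : [set z in x :: rcons t y] \subset U by apply: upath_subset ut _ => z; rewrite inE.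
apply: leq_trans (forall_inP (PU BU cycB) x _); last by rewrite inE mem_head.
by apply/subset_leq_card/subsetP=> u; rewrite !inE => /andP[-> ->]; rewrite orbT.
Qed.

Lemma longest_upath_deg x t : longest_upath x t -> #|nbr U x| <= 2.
Proof.
move=> L; apply: leq_trans (upath_head_deg L.1); apply/subset_leq_card/subsetP=> u.
by rewrite !inE => /andP[uU exu]; rewrite (longest_upath_nbr L uU exu).
Qed.

Local Notation N := (nbr U).

(* Moving a light pair into the sparse set costs at most four vertices for a
   gain of two, the rate at which [c4_sparse_num] grows. *)
Definition light_pair a b :=
  [&& a \in U, b \in U, a != b & #|[set a; b] :|: N a :|: N b| <= 4].

Lemma nbr_sub_set1 u v : v \in N u -> #|N u| <= 1 -> N u \subset [set v].
Proof. by move=> vN /card_le1P/(_ v vN) Nv; apply/subsetP=> z; rewrite Nv inE. Qed.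

Lemma light_pair_adjacent a b :
  a \in U -> b \in U -> e a b -> #|N a| + #|N b| <= 4 -> light_pair a b.
Proof.
move=> aU bU eab deg4; have bN : b \in N a by apply/nbrP.
rewrite /light_pair aU bU eq_sym (nbr_neq bN) /=.
apply: leq_trans deg4; rewrite -setUA (setUidPr _) ?leq_card_setU //.
by apply/subsetP=> z; rewrite !inE => /orP[]/eqP->; rewrite ?aU ?bU 1?(esym b a) eab ?orbT.
Qed.

Lemma light_pair_pendant a b c : a \in U -> b \in U -> a != b ->
  N a \subset [set c] -> N b \subset [set c] -> light_pair a b.
Proof.
move=> aU bU ab Na Nb; rewrite /light_pair aU bU ab /=.
apply: (@leq_trans 3) => //; apply: (card_sub_size (s := [:: a; b; c])) => z.
case/setUP=> [/setUP[/set2P[]|/(subsetP Na)/set1P]|/(subsetP Nb)/set1P] ->;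
by rewrite !inE eqxx ?orbT.
Qed.


(* A cycle C through x, v1 and v2 leaves no room at v1: a nonseparable set
   through v1, v2 and a third neighbour of v1 would merge with C into one in
   which v1 has degree 3. *)
Section CycleAtHead.
Variables (x v1 v2 : V) (s : seq V).
Hypothesis L : longest_upath x [:: v1, v2 & s].
Variable C : {set V}.
Hypotheses (CU : C \subset U) (nsC : nonseparable e C).
Hypotheses (xC : x \in C) (v1C : v1 \in C) (v2C : v2 \in C).

Lemma v1_nonsep_nbr (D : {set V}) w : D \subset U -> nonseparable e D ->
  v1 \in D -> v2 \in D -> w \in D -> e v1 w -> (w == x) || (w == v2).
Proof.
move=> DU nsD v1D v2D wD ev1w; apply/negPn/negP; rewrite negb_or => /andP[wx wv2].
case/and3P: L.1 => /and3P[exv1 ev1v2 _] /and3P[+ + _] _.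
rewrite !inE !negb_or => /and3P[_ xv2 _] /andP[v12 _].
have nsCD := nonseparableU nsC nsD v12 v1C v1D v2C v2D.
have CDU : C :|: D \subset U by rewrite subUset CU.
have := forall_inP (PU CDU nsCD) v1; rewrite inE v1C => /(_ isT); apply/negP.
rewrite -ltnNge; apply/card_gt2P; exists x, v2, w.
by rewrite !inE xC v2C wD !orbT (esym v1 x) exv1 ev1v2 ev1w xv2 eq_sym wv2 wx.
Qed.

Lemma v1_nbr_on_path u : u \in N v1 -> u \in [:: x, v1, v2 & s] -> (u == x) || (u == v2).
Proof.
move=> uN; rewrite !inE => /or4P[-> // | /eqP uv1 | -> | us]; rewrite ?orbT //.
  by move: (nbr_neq uN); rewrite uv1 eqxx.
have /nbrP[uU ev1u] := uN; case/and3P: L.1 => /andP[_ pv1] /andP[_ uv1] _.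
have [D nsD [DP /and3P[v1D v2D uD] _]] := chord_nonseparable pv1 uv1 us ev1u.
have DU : D \subset U by apply: upath_subset L.1 _ => z /DP zP; rewrite inE zP orbT.
exact: v1_nonsep_nbr DU nsD v1D v2D uD ev1u.
Qed.

Lemma v1_nbr_off_path u : u \in N v1 -> u \notin [:: x, v1, v2 & s] -> N u \subset [set v1].
Proof.
move=> /nbrP[uU ev1u] uP; case/and3P: L.1 => /andP[_ pv1] /andP[_ uv1] /andP[_ Ps].
have uP' : u \notin [:: v1, v2 & s] by move: uP; rewrite inE negb_or => /andP[].
have pu : path e u [:: v1, v2 & s] by rewrite /= esym ev1u.
have uu : uniq [:: u, v1, v2 & s] by rewrite /= uP'.
have Lu : longest_upath u [:: v1, v2 & s].
  by apply: longest_upath_rehead L _ _; rewrite // /upath pu uu /= uU.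
apply/subsetP=> w wN; rewrite inE; apply/negPn/negP=> wv1.
have /nbrP[wU euw] := wN.
have := longest_upath_nbr Lu wU euw; rewrite inE (negbTE wv1) /= => ws.
have [D nsD [DP /and3P[uD v1D wD] v2D]] := chord_nonseparable pu uu ws euw.
have := v1_nonsep_nbr (upath_subset Lu.1 DP) nsD v1D v2D uD ev1u.
by move: uP; rewrite !inE => /norP[/negPf-> /norP[_ /norP[/negPf-> _]]].
Qed.

Lemma light_pair_near_cycle : exists a b, light_pair a b.
Proof.
case/and3P: (L.1) => /andP[exv1 _] /andP[+ _] /and3P[xU v1U _].
rewrite inE negb_or => /andP[xv1 _].
set Q := N v1 :\: [set z in [:: x, v1, v2 & s]].
have QN u : u \in Q -> u \in N v1 /\ u \notin [:: x, v1, v2 & s].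
  by rewrite in_setD in_set => /andP[].
have QU u : u \in Q -> u \in U by case/QN=> /nbrP[].
have Qpend u : u \in Q -> N u \subset [set v1] by case/QN; apply: v1_nbr_off_path.
have Nv1 z : z \in N v1 -> [\/ z = x, z = v2 | z \in Q].
  move=> zN; have [zP|zP] := boolP (z \in [:: x, v1, v2 & s]).
    by case/orP: (v1_nbr_on_path zN zP) => /eqP->; [apply: Or31 | apply: Or32].
  by apply: Or33; rewrite in_setD zN in_set zP.
have [/card_gt1P[u [u' [uQ u'Q uu']]]|] := ltnP 1 #|Q|.
  exists u, u'.
  exact: light_pair_pendant (QU _ uQ) (QU _ u'Q) uu' (Qpend _ uQ) (Qpend _ u'Q).
rewrite leq_eqVlt ltnS leqn0 => /orP[/cards1P[u Qu]|/eqP/cards0_eq Q0].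
  have uQ : u \in Q by rewrite Qu set11.
  exists u, v1; apply: light_pair_adjacent (QU _ uQ) v1U _ _.
    by case/QN: uQ => /nbrP[_]; rewrite esym.
  apply: (@leq_add _ _ 1 3); first by rewrite -(cards1 v1) subset_leq_card ?Qpend.
  apply: (card_sub_size (s := [:: x; v2; u])) => z /Nv1[-> | -> | ];
    rewrite ?Qu !inE ?eqxx ?orbT // => /eqP->.
  by rewrite eqxx !orbT.
exists x, v1; apply: light_pair_adjacent xU v1U exv1 _.
apply: (leq_add (longest_upath_deg L)).
apply: (card_sub_size (s := [:: x; v2])) => z /Nv1[-> | -> | ];
by rewrite ?Q0 ?inE ?eqxx ?orbT.
Qed.

End CycleAtHead.

Lemma longest_head_deg2 x v1 s :
  longest_upath x (v1 :: s) -> #|N x| = 2 -> exists a b, light_pair a b.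
Proof.
move=> L degx; case/and3P: (L.1) => pt uxs /and3P[xU v1U _].
have exv1 : e x v1 by case/andP: pt.
have v1N : v1 \in N x by apply/nbrP.
have /set0Pn[va] : N x :\ v1 != set0.
  by rewrite -card_gt0; have := cardsD1 v1 (N x); rewrite v1N degx; lia.
rewrite in_setD1 => /andP[vav1 /nbrP[vaU exva]].
have := longest_upath_nbr L vaU exva; rewrite inE (negbTE vav1) /=.
case: s L pt uxs => [//|v2 s] L pt uxs vas.
have [C nsC [CP /and3P[xC v1C _] v2C]] := chord_nonseparable pt uxs vas exva.
exact: (light_pair_near_cycle L (upath_subset L.1 CP) nsC xC v1C v2C).
Qed.

Lemma longest_head_deg1 x v1 s :
  longest_upath x (v1 :: s) -> #|N x| = 1 -> exists a b, light_pair a b.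
Proof.
move=> L degx; case/and3P: (L.1) => pt uxs xsU.
have [exv1 pv1] : e x v1 /\ path e v1 s by apply/andP.
have [_ us] : x \notin v1 :: s /\ uniq (v1 :: s) by apply/andP.
have [xU v1sU] : x \in U /\ all [in U] (v1 :: s) by apply/andP.
have v1U : v1 \in U by case/andP: v1sU.
have Nx : N x \subset [set v1] by apply: nbr_sub_set1; rewrite ?degx //; apply/nbrP.
set Q := N v1 :\: [set z in x :: v1 :: s].
have QP u : u \in Q -> [/\ u \in U, e v1 u, u != x & u \notin v1 :: s].
  by rewrite in_setD in_set inE negb_or => /andP[/andP[ux uv1s] /nbrP[uU ev1u]].
have LQ u : u \in Q -> longest_upath u (v1 :: s).
  case/QP=> uU ev1u _ uv1s; apply: longest_upath_rehead L _ _ => //.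
  apply/and3P; split; [by rewrite /= esym ev1u | by rewrite cons_uniq uv1s | by rewrite /= uU].
have [/exists_inP[u uQ /eqP deg2u]|/exists_inPn no2] := boolP [exists u in Q, #|N u| == 2].
  exact: longest_head_deg2 (LQ u uQ) deg2u.
have [Q0|/set0Pn[u uQ]] := eqVneq Q set0; last first.
  have [uU ev1u ux _] := QP u uQ.
  have Nu : N u \subset [set v1].
    apply: nbr_sub_set1; first by apply/nbrP; rewrite esym.
    by have := longest_upath_deg (LQ u uQ); rewrite leq_eqVlt ltnS (negbTE (no2 u uQ)).
  by exists x, u; apply: light_pair_pendant xU uU _ Nx Nu; rewrite eq_sym.
exists x, v1; apply: light_pair_adjacent xU v1U exv1 _; rewrite degx.
have Nv1 : N v1 \subset [set x] :|: [set w in s | e v1 w].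
  apply/subsetP=> z zN; have /nbrP[_ ev1z] := zN.
  have : z \notin Q by rewrite Q0 inE.
  rewrite in_setD zN andbT negbK !inE => /or3P[->//|/eqP zv1|->]; last by rewrite ev1z orbT.
  by move: ev1z; rewrite zv1 eirr.
apply: leq_trans (subset_leq_card Nv1) _; apply: leq_trans (leq_card_setU _ _) _.
by rewrite cards1 add1n ltnS (upath_head_deg (_ : upath v1 s)) // /upath pv1 us v1sU.
Qed.

Lemma isolated_or_light_pair : U != set0 ->
  (exists2 v, v \in U & N v = set0) \/ exists a b, light_pair a b.
Proof.
case/set0Pn=> z /longest_upath_exists[x [t L]]; have xU := upath_sub L.1 (mem_head x t).
case: t L => [|v1 s] L.
  left; exists x => //; apply/eqP; rewrite -subset0; apply/subsetP=> y /nbrP[yU exy].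
  by move: (longest_upath_nbr L yU exy); rewrite in_nil.
right; have v1N : v1 \in N x.
  by apply/nbrP; rewrite (upath_sub L.1) ?inE ?eqxx ?orbT //; case/and3P: L.1 => /andP[].
have := longest_upath_deg L; rewrite leq_eqVlt ltnS leq_eqVlt ltnS leqn0.
case/or3P=> [/eqP|/eqP|]; [exact: longest_head_deg2 L | exact: longest_head_deg1 L |].
by rewrite cards_eq0 => /eqP N0; rewrite N0 inE in v1N.
Qed.

End LongestPath.

Lemma maxdeg1_subset_exists (U : {set V}) : nonsep_maxdeg2 U ->
  exists2 S : {set V}, S \subset U & maxdeg_le 1 S && (c4_sparse_num #|U| <= #|S|).
Proof.
have [n] := ubnP #|U|; elim: n U => // n IH U ltUn PU.
have PUsub (W : {set V}) : W \subset U -> nonsep_maxdeg2 W.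
  by move=> WU B BW; apply: PU (subset_trans BW WU).
have [-> | U0] := eqVneq U set0.
  by exists set0; rewrite ?sub0set ?cards0 ?maxdeg_le_small ?cards0.
have step (X A : {set V}) : X \subset U -> 0 < #|A| <= 2 -> A \subset X ->
    minn #|X| 2 <= #|A| -> #|X| <= 4 ->
    {in A, forall a, nbr U a \subset X} ->
    exists2 S : {set V}, S \subset U & maxdeg_le 1 S && (c4_sparse_num #|U| <= #|S|).
  move=> XU /andP[A0 A2] AX AXcard X4 NAX.
  have X0 : 0 < #|X| := leq_trans A0 (subset_leq_card AX).
  have cardUX : #|U :\: X| = #|U| - #|X| by rewrite cardsD (setIidPr XU).
  have ltUXn : #|U :\: X| < n by rewrite cardUX; have := subset_leq_card XU; lia.
  have [S SUX /andP[dS gS]] := IH (U :\: X) ltUXn (PUsub _ (subsetDl U X)).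
  have [dAS cardAS] := maxdeg1_extend A2 AX NAX SUX dS.
  exists (A :|: S); first by rewrite subUset (subset_trans AX XU) (subset_trans SUX) ?subsetDl.
  rewrite dAS cardAS /=; apply: leq_trans (c4_sparse_num_sub #|U| X4) _.
  by rewrite -cardUX addnC leq_add.
case: (isolated_or_light_pair PU U0) => [[v vU Nv] | [a [b /and4P[aU bU ab X4]]]].
  apply: (step [set v] [set v]); rewrite ?subxx ?sub1set ?cards1 //.
  by move=> u; rewrite inE => /eqP->; rewrite Nv sub0set.
apply: (step ([set a; b] :|: nbr U a :|: nbr U b) [set a; b]);
  rewrite ?cards2 ?ab /= ?geq_minr //.
- by rewrite !subUset !sub1set aU bU !nbr_sub.
- by rewrite -setUA subsetUl.
- by move=> u /set2P[]->; apply/subsetU/orP; [left; rewrite subsetUr | right].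
Qed.

End Graph.

Section FourCycles.
Variable n : nat.

(* The blocks {4q, ..., 4q+3} are the 4-cycles 4q, 4q+1, 4q+2, 4q+3; the last
   block may be truncated to a path. *)
Definition c4_union : rel 'I_n := fun x y => (x %/ 4 == y %/ 4) && (x %% 2 != y %% 2).

Lemma c4_union_sym : symmetric c4_union.
Proof. by move=> x y; rewrite /c4_union eq_sym (eq_sym (x %% 2)). Qed.

Lemma c4_union_irr : irreflexive c4_union.
Proof. by move=> x; rewrite /c4_union !eqxx. Qed.

Lemma c4_union_maxdeg2 : maxdeg_le c4_union 2 [set: 'I_n].
Proof.
apply/forall_inP=> v _; rewrite -[2]card_bool.
apply: (leq_card_in (fun u : 'I_n => odd (u %/ 2))) => u w.
rewrite !inE /c4_union /= => /andP[/eqP uv /eqP ouv] /andP[/eqP wv /eqP owv] ouw.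
have o2 : u %/ 2 %% 2 = w %/ 2 %% 2 by rewrite !modn2 ouw.
apply: ord_inj; lia.
Qed.

Lemma c4_union_cactus : cactus c4_union.
Proof. exact: maxdeg2_cactus c4_union_irr c4_union_maxdeg2. Qed.

Variable S : {set 'I_n}.
Hypothesis dS : maxdeg_le c4_union 1 S.

Lemma c4_union_block_le2 x y z :
  x \in S -> y \in S -> z \in S -> x < y < z -> x %/ 4 = z %/ 4 -> False.
Proof.
move=> xS yS zS /andP[xy yz] xz.
have center (c a b : 'I_n) : c \in S -> a \in S -> b \in S -> a < b ->
    a %/ 4 = c %/ 4 -> b %/ 4 = c %/ 4 -> a %% 2 != c %% 2 -> b %% 2 != c %% 2 -> False.
  move=> cS aS bS ab ac bc pac pbc; have := forall_inP dS c cS; apply/negP.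
  rewrite -ltnNge; apply/card_gt1P; exists a, b.
  rewrite !inE /c4_union aS bS ac bc !eqxx eq_sym pac eq_sym pbc; split=> //.
  by apply: contraTneq ab => ->; rewrite ltnn.
have [pxz|pxz] := eqVneq (x %% 2) (z %% 2).
  by apply: (center y x z) => //; try apply/eqP; lia.
have [pyx|pyx] := eqVneq (y %% 2) (x %% 2).
  by apply: (center z x y) => //; try apply/eqP; lia.
by apply: (center x y z) => //; try apply/eqP; lia.
Qed.

Lemma c4_union_maxdeg1_card : #|S| <= c4_sparse_num n.
Proof.
(* A block holds at most two vertices of S, and [rank] gives them the values
   2q and 2q+1. *)
pose prev (x : 'I_n) := [exists y in S, (y %/ 4 == x %/ 4) && (y < x)].
pose rank (x : 'I_n) := 2 * (x %/ 4) + prev x.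
have prevP x : prev x -> exists2 y, y \in S & y %/ 4 = x %/ 4 /\ y < x.
  by case/exists_inP=> y yS /andP[/eqP]; exists y.
have rank_lt x : rank x < c4_sparse_num n.
  rewrite /rank /c4_sparse_num; have := ltn_ord x.
  by case: (boolP (prev x)) => [/prevP[y _ [yx4 yx]]|_] /=; lia.
have rank_neq x y : x \in S -> y \in S -> x < y -> rank x != rank y.
  move=> xS yS xy; apply/eqP; rewrite /rank => eqr.
  have [xy4 prevxy] : x %/ 4 = y %/ 4 /\ prev x = prev y.
    by move: eqr; case: (prev x); case: (prev y) => /=; lia.
  have : prev x by rewrite prevxy; apply/exists_inP; exists x; rewrite // xy4 eqxx.
  by case/prevP=> z zS [zx4 zx]; apply: (c4_union_block_le2 zS xS yS); rewrite ?zx ?xy //; lia.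
have rank_inj : {in S &, injective rank}.
  move=> x y xS yS eqr; case: (ltngtP x y) => [xy|yx|/ord_inj//].
    by move: (rank_neq x y xS yS xy); rewrite eqr eqxx.
  by move: (rank_neq y x yS xS yx); rewrite eqr eqxx.
rewrite cardE -(size_map rank) -[c4_sparse_num n](size_iota 0).
apply: uniq_leq_size => [|k /mapP[x _ ->]]; last by rewrite mem_iota rank_lt.
by rewrite map_inj_in_uniq ?enum_uniq // => x y; rewrite !mem_enum; apply: rank_inj.
Qed.

End FourCycles.

Theorem theorem4p2 (i j : nat) (hi : 5 <= i) (hj : 1 <= j) :
  is_ramsey_cactus 1 i j (if odd j then 2 * j - 1 else 2 * j - 2).
Proof.
split=> [e [esym eirr] cac | n ltn ramsey_n].
  have [S _ /andP[dS gS]] :=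
    maxdeg1_subset_exists esym eirr (cactus_nonsep_maxdeg2 cac).
  right; apply: maxdeg_le_sparse_set dS _.
  by apply: leq_trans gS; rewrite cardsT card_ord leq_c4_sparse_num.
have [[S denseS] | [S /andP[/eqP cardS dS]]] :=
  ramsey_n _ (conj (@c4_union_sym n) (@c4_union_irr n)) (@c4_union_cactus n).
  by move: denseS; apply/negP/maxdeg_no_dense; [exact: c4_union_maxdeg2 | lia].
have := c4_union_maxdeg1_card dS; rewrite cardS leq_c4_sparse_num //.
by rewrite leqNgt ltn.
Qed.
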